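(* In the setting below, under one of the mechanisms (g), (mp), (mn) with corresponding label $\square$, for each $1\le k\le n_1$ let $\mathcal I^\alpha_{\texttt t,k}=\{c\in\mathbb R:\tilde p^{\square}_{\texttt t,k,c}>\alpha\}$. Then $\mathcal I^\alpha_{\texttt t,k}$ is a $1-\alpha$ prediction set for $\tau_{\texttt t(k)}$ (i.e. $\mathbb P(\tau_{\texttt t(k)}\in\mathcal I^\alpha_{\texttt t,k})\ge1-\alpha$), it is a one-sided interval of the form $[\hat\tau_{\texttt t(k)},\infty)$ or $(\hat\tau_{\texttt t(k)},\infty)$ with $\hat\tau_{\texttt t(k)}=\inf\mathcal I^\alpha_{\texttt t,k}$, and these sets are simultaneously valid: $\mathbb P\big(\tau_{\texttt t(k)}\in\mathcal I^\alpha_{\texttt t,k}\text{ for all }1\le k\le n_1\big)\ge1-\alpha$.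
   Context: There are $n$ units with fixed potential outcomes $Y_i^\star(0),Y_i^\star(1)\in\mathbb R$ and fixed potential missingness indicators $M_i(0),M_i(1)\in\{0,1\}$; $\tau_i=Y_i^\star(1)-Y_i^\star(0)$. $\boldsymbol Z\in\{0,1\}^n$ is from a completely randomized experiment (CRE): uniform over vectors with exactly $n_1$ ones ($n_1,n_0\ge1$ fixed, $n_1+n_0=n$), independent of all potential quantities. $M_i=Z_iM_i(1)+(1-Z_i)M_i(0)$; the realized outcome $Z_iY_i^\star(1)+(1-Z_i)Y_i^\star(0)$ is observed, denoted $Y_i$, iff $M_i=1$. $\tau_{\texttt t(1)}\le\dots\le\tau_{\texttt t(n_1)}$ are the sorted values of $\{\tau_i:Z_i=1\}$. Mechanisms: (g) $M_i(1),M_i(0)$ arbitrary constants; (mp) $M_i(1)\ge M_i(0)$ for all $i$; (mn) $M_i(1)\le M_i(0)$ for all $i$. Statistics: $\overline{\mathbb R}=\mathbb R\cup\{\pm\infty\}$; $\psi_{i,j}(y,y')=\mathbf 1\{y>y'\}+\mathbf 1\{y=y'\}\mathbf 1\{i\ge j\}$; $\mathrm{rank}_i(\boldsymbol y)=\sum_j\psi_{i,j}(y_i,y_j)$; $\phi$ nondecreasing on the nonnegative integers; $t_{\mathrm R,\phi}(\boldsymbol z,\boldsymbol y)$ is either $\sum_i z_i\phi(\mathrm{rank}_i(\boldsymbol y))$ or $\sum_i z_i\phi(\sum_j(1-z_j)\psi_{i,j}(y_i,y_j))$; $G_{\mathrm R,\phi}(c)=\mathbb P(t_{\mathrm R,\phi}(\boldsymbol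 A,\boldsymbol y_0)\ge c)$, $\boldsymbol A$ from the CRE, $\boldsymbol y_0\in\mathbb R^n$ any fixed vector. p-values: for $\boldsymbol\delta\in\mathbb R^n$, $\tilde{\boldsymbol Y}^{\square}_{\boldsymbol Z,\boldsymbol\delta}(0)\in\overline{\mathbb R}^n$ has coordinate $Y_i-\delta_i$ if $Z_i=M_i=1$, $Y_i$ if $Z_i=0,M_i=1$; if $Z_i=1,M_i=0$ it is $-\infty,+\infty,-\infty$ for $\square=\texttt g,\texttt{mp},\texttt{mn}$; if $Z_i=0,M_i=0$ it is $+\infty,+\infty,-\infty$ respectively. With $\mathcal J=\{i:Z_i=M_i=1\}=\{j_1,\dots,j_{n_{11}}\}$ ordered so that $\psi_{j_{l+1},j_l}(Y_{j_{l+1}},Y_{j_l})=1$, $\mathcal J_L=\{j_{n_{11}-L+1},\dots,j_{n_{11}}\}$, $\mathcal J_0=\emptyset$, and fixed $\kappa>0$, let $\xi_{k,c,i}=\max_{l:Z_l=M_l=1}Y_l-\min_{l:Z_l=0,M_l=1}Y_l+\kappa$ for $i\in\mathcal J_{\min\{n_1-k,n_{11}\}}$ and $\xi_{k,c,i}=c$ otherwise; then $\tilde p^{\square}_{\texttt t,k,c}=G_{\mathrm R,\phi}(t_{\mathrm R,\phi}(\boldsymbol Z,\tilde{\boldsymbol Y}^{\square}_{\boldsymbol Z,\boldsymbol\xi_{k,c}}(0)))$. *)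

From HB Require Import structures.
From mathcomp Require Import all_boot all_order all_algebra.
From mathcomp Require Import classical_sets reals constructive_ereal ereal.
Set Implicit Arguments. Unset Strict Implicit. Unset Printing Implicit Defensive.
Import Order.TTheory GRing.Theory Num.Theory.
Local Open Scope ring_scope.

Section Defs.
Variables (R : realType) (n : nat).

Definition assign := {ffun 'I_n -> bool}.

Definition cre_support (n1 : nat) : {set assign} :=
  [set z : assign | #|[set i | z i]| == n1].

Definition Pcre (n1 : nat) (E : assign -> bool) : R :=
  #|[set z in cre_support n1 | E z]|%:R / #|cre_support n1|%:R.

Definition psi (i j : 'I_n) (y y' : \bar R) : nat :=
  ((y' < y)%E || ((y == y') && (j <= i)%N) : nat).

Definition rank (y : 'I_n -> \bar R) (i : 'I_n) : nat :=
  \sum_(j < n) psi i j (y i) (y j).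

Inductive stat_kind := RankAll | RankCtrl.

Definition tstat (kd : stat_kind) (phi : nat -> R) (z : assign)
    (y : 'I_n -> \bar R) : R :=
  match kd with
  | RankAll => \sum_(i < n | z i) phi (rank y i)
  | RankCtrl => \sum_(i < n | z i) phi (\sum_(j < n | ~~ z j) psi i j (y i) (y j))
  end.

Definition Gfun (n1 : nat) (kd : stat_kind) (phi : nat -> R) (y0 : 'I_n -> R)
    (c : R) : R :=
  Pcre n1 (fun A => c <= tstat kd phi A (fun i => (y0 i)%:E)).

Inductive mech := Mg | Mmp | Mmn.

Definition mech_ok (m : mech) (M1 M0 : 'I_n -> bool) : Prop :=
  match m with
  | Mg => True
  | Mmp => forall i, M0 i ==> M1 i
  | Mmn => forall i, M1 i ==> M0 i
  end.

Variables (Y1 Y0 : 'I_n -> R) (M1 M0 : 'I_n -> bool).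

Definition Mobs (z : assign) (i : 'I_n) : bool := if z i then M1 i else M0 i.
Definition Yobs (z : assign) (i : 'I_n) : R := if z i then Y1 i else Y0 i.

Definition tildeY (m : mech) (z : assign) (delta : 'I_n -> R) (i : 'I_n) : \bar R :=
  if Mobs z i then
    (if z i then (Yobs z i - delta i)%:E else (Yobs z i)%:E)
  else match m, z i with
       | Mg, true => -oo%E
       | Mg, false => +oo%E
       | Mmp, _ => +oo%E
       | Mmn, _ => -oo%E
       end.

Definition inJ (z : assign) (i : 'I_n) : bool := z i && Mobs z i.
Definition n11 (z : assign) : nat := #|[set i | inJ z i]|.

(* position of i in the psi-ordering j_1, ..., j_{n11} of J:
   i = j_l  iff  posJ z i = l *)
Definition posJ (z : assign) (i : 'I_n) : nat :=
  #|[set j | inJ z j && (psi i j (Yobs z i)%:E (Yobs z j)%:E == 1%N)]|.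

(* J_L = {j_{n11-L+1}, ..., j_{n11}} *)
Definition inJL (z : assign) (L : nat) (i : 'I_n) : bool :=
  inJ z i && (n11 z - L < posJ z i)%N.

(* max_{l in J} Y_l and min_{l : Z_l = 0, M_l = 1} Y_l
   (empty max/min are irrelevant; by convention they give 0 via fine) *)
Definition maxJ (z : assign) : R :=
  fine (\big[maxe/-oo%E]_(l < n | inJ z l) (Yobs z l)%:E).
Definition minC (z : assign) : R :=
  fine (\big[mine/+oo%E]_(l < n | ~~ z l && Mobs z l) (Yobs z l)%:E).

Definition xi (n1 : nat) (kappa : R) (z : assign) (k : nat) (c : R) (i : 'I_n) : R :=
  if inJL z (minn (n1 - k) (n11 z)) i then maxJ z - minC z + kappa else c.

Definition pval (n1 : nat) (kd : stat_kind) (phi : nat -> R) (y0 : 'I_n -> R)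
    (m : mech) (kappa : R) (z : assign) (k : nat) (c : R) : R :=
  Gfun n1 kd phi y0 (tstat kd phi z (tildeY m z (xi n1 kappa z k c))).

(* tau_{t(k)}: k-th smallest (1-based) of {tau_i : Z_i = 1} *)
Definition tau_sorted (z : assign) (k : nat) : R :=
  nth 0 (sort <=%R [seq Y1 i - Y0 i | i <- enum 'I_n & z i]) k.-1.

End Defs.

(* Let y be the vector of control outcomes in which every outcome that the
   missingness mechanism allows to be missing is replaced by its least
   favourable value (+oo or -oo); y does not depend on the assignment. For c =
   tau_t(k), at most L = min(n1 - k, n11) treated units with an observed
   outcome have an effect exceeding c, while xi_{k,c} pushes the L top units of
   J below every observed control. Matching the former against the latter shows
   that, over the treated units, the number of controls ranked below a unit
   under the imputed vector is stochastically smaller than under y, and then so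
   is the full rank. Both statistics sum a nondecreasing function of one of
   these over the treated units, so the p-value is at least the randomization
   p-value G(t(Z, y)). Ties are broken by unit index, so the null law of t(A,
   y) does not depend on y, and this randomization p-value exceeds alpha with
   probability at least 1 - alpha. The bound holds for every k at once, which
   gives simultaneous validity, and the p-value is nondecreasing in c, which
   gives the interval shape. *)

From mathcomp Require Import all_boot all_order all_algebra.
From mathcomp Require Import fingroup perm.
From mathcomp Require Import reals constructive_ereal.
From mathcomp Require Import zify lra.
Set Implicit Arguments. Unset Strict Implicit. Unset Printing Implicit Defensive.
Import Order.TTheory GRing.Theory Num.Theory.
Local Open Scope ring_scope.

Lemma card_sep (I : finType) (P Q Q' : pred I) : (forall i, Q' i = ~~ Q i) ->
  (#|[set i | P i & Q i]| + #|[set i | P i & Q' i]|)%N = #|[set i | P i]|.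
Proof.
move=> QQ'; rewrite -(cardsID [set i | Q i] [set i | P i]).
by congr addn; apply: eq_card => i; rewrite !inE // QQ' andbC.
Qed.

Lemma leq_card_inj_interval (I : finType) (X : {set I}) (f : I -> nat) a b :
  {in X &, injective f} -> (forall x, x \in X -> a <= f x < b)%N ->
  (#|X| <= b - a)%N.
Proof.
move=> f_inj f_range; rewrite cardE -(size_map f) -(size_iota a (b - a)).
apply: uniq_leq_size.
  by rewrite map_inj_in_uniq ?enum_uniq // => x x'; rewrite !mem_enum; exact: f_inj.
move=> v /mapP[x]; rewrite mem_enum => /f_range /andP[ax xb] ->.
by rewrite mem_iota ax subnKC ?(leq_trans ax (ltnW xb)).
Qed.

Section LexRank.
Variables (d : Order.disp_t) (T : orderType d) (n : nat).
Implicit Types (u v w : T) (i j k : 'I_n) (y : 'I_n -> T) (P : pred 'I_n).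

Definition lexle u i v j : bool := (u < v)%O || ((u == v) && (i <= j)%N).

Lemma lexle_refl u i : lexle u i u i.
Proof. by rewrite /lexle eqxx leqnn orbT. Qed.

Lemma lexle_trans u i v j w k : lexle u i v j -> lexle v j w k -> lexle u i w k.
Proof.
rewrite /lexle => /orP[uv|/andP[/eqP-> ij]] /orP[vw|/andP[/eqP<- jk]].
- by rewrite (lt_trans uv vw).
- by rewrite uv.
- by rewrite vw.
- by rewrite eqxx (leq_trans ij jk) orbT.
Qed.

Lemma lexle_total u i v j : lexle u i v j || lexle v j u i.
Proof. by rewrite /lexle; case: ltgtP => //= _; rewrite leq_total. Qed.

Lemma lexle_swap u i v j : ~~ lexle u i v j -> lexle v j u i.
Proof. by move=> h; move: (lexle_total u i v j); rewrite (negbTE h). Qed.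

Lemma lexle_anti u i v j : lexle u i v j -> lexle v j u i -> i = j.
Proof.
rewrite /lexle; case: ltgtP => //= _ ij ji.
by apply/val_inj/eqP; rewrite eqn_leq ij ji.
Qed.

Lemma lexle_le u i v j : lexle u i v j -> (u <= v)%O.
Proof. by rewrite /lexle => /orP[/ltW|/andP[/eqP-> _]]. Qed.

Lemma le_lexle u v i : (u <= v)%O -> lexle u i v i.
Proof. by rewrite /lexle le_eqVlt => /orP[->|->]; rewrite ?leqnn ?orbT. Qed.

Lemma lt_lexle u i v j : (u < v)%O -> lexle u i v j.
Proof. by rewrite /lexle => ->. Qed.

Definition rank_in P y i : nat := #|[set j | P j & lexle (y j) j (y i) i]|.

Lemma le_rank_in P y i j :
  lexle (y j) j (y i) i -> (rank_in P y j <= rank_in P y i)%N.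
Proof.
move=> ji; apply/subset_leq_card/subsetP => k; rewrite !inE.
by case/andP=> -> kj; exact: lexle_trans kj ji.
Qed.

Lemma lexle_rank_in P y i j : P i ->
  (rank_in P y i <= rank_in P y j)%N -> lexle (y i) i (y j) j.
Proof.
move=> Pi; apply: contraTT => nij; rewrite -ltnNge.
apply/proper_card/properP; split.
  apply/subsetP => k; rewrite !inE => /andP[-> kj].
  exact: lexle_trans kj (lexle_swap nij).
by exists i; rewrite !inE ?Pi ?lexle_refl //= (negbTE nij).
Qed.

Lemma rank_in_raise P y y' i j : (forall k, P k -> y k <= y' k)%O ->
  lexle (y' i) i (y j) j -> (rank_in P y' i <= rank_in P y j)%N.
Proof.
move=> yy' ij; apply/subset_leq_card/subsetP => k; rewrite !inE.
case/andP=> Pk ki; rewrite Pk.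
exact: lexle_trans (le_lexle k (yy' k Pk)) (lexle_trans ki ij).
Qed.

Lemma rank_in_predTE (z : pred 'I_n) y i :
  rank_in predT y i = (rank_in z y i + rank_in (fun j => ~~ z j) y i)%N.
Proof.
rewrite /rank_in -(cardsID [set j | z j] [set j | predT j & _]).
by congr addn; apply: eq_card => j; rewrite !inE /=; case: (z j); rewrite ?andbT ?andbF.
Qed.

Lemma rank_in_gt0 P y i : P i -> (0 < rank_in P y i)%N.
Proof. by move=> Pi; apply/card_gt0P; exists i; rewrite inE Pi lexle_refl. Qed.

Lemma rank_in_le_card P y i : (rank_in P y i <= #|[set j | P j]|)%N.
Proof. by apply/subset_leq_card/subsetP => k; rewrite !inE => /andP[]. Qed.

Lemma rank_in_inj P y : {in P &, injective (rank_in P y)}.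
Proof.
suff lex_inj i j : P i -> P j -> lexle (y i) i (y j) j ->
    rank_in P y i = rank_in P y j -> i = j.
  move=> i j Pi Pj e; have /orP[ij|ji] := lexle_total (y i) i (y j) j.
  - exact: lex_inj.
  - exact/esym/lex_inj.
move=> Pi Pj ij e; exact: lexle_anti ij (lexle_rank_in Pj (eq_leq (esym e))).
Qed.

Lemma card_rank_in_le P y r : (#|[set i | P i & rank_in P y i <= r]| <= r)%N.
Proof.
rewrite -[leqRHS]subn0 -(subSS 0 r).
apply: (@leq_card_inj_interval _ _ (rank_in P y)) => [i j|i].
  by rewrite !inE => /andP[Pi _] /andP[Pj _]; exact: rank_in_inj.
by rewrite inE => /andP[Pi ir]; rewrite rank_in_gt0.
Qed.

Lemma card_rank_in_ge P y r : (r <= #|[set i | P i]|)%N ->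
  (r <= #|[set i | P i & rank_in P y i <= r]|)%N.
Proof.
move=> rP; have high : (#|[set i | P i & r < rank_in P y i]| <= #|[set i | P i]| - r)%N.
  rewrite -subSS; apply: (@leq_card_inj_interval _ _ (rank_in P y)) => [i j|i].
    by rewrite !inE => /andP[Pi _] /andP[Pj _]; exact: rank_in_inj.
  by rewrite inE => /andP[_ ri]; rewrite ri ltnS rank_in_le_card.
have := card_sep P (fun i => ltnNge r (rank_in P y i)).
lia.
Qed.

Lemma card_lt_rank_in P (U : pred 'I_n) y i : P i -> ~~ U i ->
  (forall j, P j -> U j -> lexle (y j) j (y i) i) ->
  (#|[set j | P j & U j]| < rank_in P y i)%N.
Proof.
move=> Pi Ui below.
have sub : i |: [set j | P j & U j] \subset [set j | P j & lexle (y j) j (y i) i].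
  apply/subsetP => j; rewrite !inE => /orP[/eqP->|/andP[Pj Uj]].
  - by rewrite Pi lexle_refl.
  - by rewrite Pj below.
by apply: leq_trans (subset_leq_card sub); rewrite cardsU1 inE negb_and Ui orbT add1n.
Qed.

End LexRank.

Lemma lexle_mono d (T : orderType d) d' (T' : orderType d') n (f : T -> T')
    u (i : 'I_n) v j :
  {mono f : a b / (a <= b)%O} -> lexle (f u) i (f v) j = lexle u i v j.
Proof. by move=> f_mono; rewrite /lexle (leW_mono f_mono) (inj_eq (inc_inj f_mono)). Qed.

Section RankPerm.
Variables (d : Order.disp_t) (T : orderType d) (n : nat).
Implicit Types (y : 'I_n -> T) (i j : 'I_n).
Local Notation rank y := (rank_in predT y).

Lemma rank_le_lexle y i j : (rank y i <= rank y j)%N = lexle (y i) i (y j) j.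
Proof. by apply/idP/idP; [exact: lexle_rank_in | exact: le_rank_in]. Qed.

Lemma rank_pred_lt y i : ((rank y i).-1 < n)%N.
Proof.
rewrite prednK ?rank_in_gt0 //.
apply: leq_trans (rank_in_le_card _ _ _) _.
by apply: leq_trans (max_card _) _; rewrite card_ord.
Qed.

Definition rank_ord y i : 'I_n := Ordinal (rank_pred_lt y i).

Lemma rank_ord_inj y : injective (rank_ord y).
Proof.
move=> i j [] e; apply: (@rank_in_inj _ _ _ predT y) => //.
by rewrite -(prednK (rank_in_gt0 y (isT : predT i))) e prednK ?rank_in_gt0.
Qed.

Definition rank_perm y : {perm 'I_n} := perm (@rank_ord_inj y).

Lemma rank_perm_le y i j :
  (rank_perm y i <= rank_perm y j)%N = lexle (y i) i (y j) j.
Proof.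
rewrite !permE /= -rank_le_lexle.
by have := rank_in_gt0 y (isT : predT i); have := rank_in_gt0 y (isT : predT j); lia.
Qed.

Definition relabel y y' : {perm 'I_n} := (rank_perm y * (rank_perm y')^-1)%g.

Lemma lexle_relabel y y' i j :
  lexle (y' (relabel y y' i)) (relabel y y' i) (y' (relabel y y' j)) (relabel y y' j)
  = lexle (y i) i (y j) j.
Proof. by rewrite -!rank_perm_le /relabel !permM !permKV. Qed.

End RankPerm.

Section StochasticOrder.
Variable I : finType.
Implicit Types (P : pred I) (f g : I -> nat).

Definition stoch_le P f g :=
  forall s, (#|[set i | P i & g i <= s]| <= #|[set i | P i & f i <= s]|)%N.

Lemma stoch_le_pointwise P f g : (forall i, P i -> f i <= g i)%N -> stoch_le P f g.
Proof.
move=> fg s; apply/subset_leq_card/subsetP => i; rewrite !inE.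
by case/andP=> Pi gi; rewrite Pi (leq_trans (fg i Pi) gi).
Qed.

Lemma stoch_le_exchange P f g (B C : {set I}) :
  {subset C <= P} -> (#|B| <= #|C|)%N ->
  (forall i, P i -> i \notin B -> f i <= g i)%N ->
  (forall b j, b \in B -> j \in C -> f b <= g j)%N ->
  (forall i b, i \in C -> b \in B -> f i <= g b)%N ->
  stoch_le P f g.
Proof.
move=> CP BC offB BC_le CB_le s.
set X := [set i | P i & (g i <= s)%N]; set X' := [set i | P i & (f i <= s)%N].
have X_offB i : i \in X -> i \notin B -> i \in X'.
  by rewrite !inE => /andP[Pi gi] iB; rewrite Pi (leq_trans (offB i Pi iB) gi).
have X_sub : (forall i, i \in X -> i \in B -> i \in X') -> (#|X| <= #|X'|)%N.
  move=> onB; apply/subset_leq_card/subsetP => i Xi.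
  by case: (boolP (i \in B)) => iB; [exact: onB | exact: X_offB].
case: (pickP [pred j | (j \in C) && (j \in X)]) => [j /andP[Cj]|noCX].
  rewrite inE => /andP[_ gj]; apply: X_sub => i; rewrite !inE => /andP[Pi _] Bi.
  by rewrite Pi (leq_trans (BC_le i j Bi Cj) gj).
case: (pickP [pred b | (b \in B) && (b \in X)]) => [b /andP[Bb]|noBX]; last first.
  by apply: X_sub => i Xi Bi; have := noBX i; rewrite /= Bi Xi.
rewrite inE => /andP[_ gb].
have sub : (X :\: B) :|: C \subset X'.
  apply/subsetP => i; rewrite inE => /orP[/setDP[Xi Bi]|Ci]; first exact: X_offB.
  by rewrite inE (leq_trans (CB_le i b Ci Bb) gb) andbT; exact: CP.
have disj : (X :\: B) :&: C = set0.
  apply/setP => i; have /= CX := noCX i.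
  by rewrite in_set0 in_setI in_setD andbC andbCA CX andbF.
apply: leq_trans (subset_leq_card sub); rewrite cardsU disj cards0 subn0.
rewrite -(cardsID B X) addnC leq_add2l.
by apply: leq_trans BC; apply/subset_leq_card/subsetIr.
Qed.

Lemma sum_layer_cake (R : zmodType) (phi : nat -> R) P f N :
  (forall i, f i <= N)%N ->
  \sum_(i | P i) phi (f i) = \sum_(i | P i) phi 0%N +
    \sum_(s < N) (phi s.+1 - phi s) *+ #|[set i | P i & (s < f i)%N]|.
Proof.
move=> fN.
have tele v : (v <= N)%N ->
    phi v = phi 0%N + \sum_(s < N | (s < v)%N) (phi s.+1 - phi s).
  move=> vN; rewrite -(big_ord_widen _ (fun s => phi s.+1 - phi s) vN).
  by rewrite -(big_mkord xpredT (fun s => phi s.+1 - phi s)) telescope_sumr // addrC subrK.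
rewrite (eq_bigr _ (fun i _ => tele _ (fN i))) big_split /=; congr (_ + _).
under eq_bigr do rewrite big_mkcond /=.
rewrite exchange_big /=; apply: eq_bigr => s _.
rewrite -big_mkcondr -sumr_const; apply: eq_bigl => i.
by rewrite inE.
Qed.

Lemma sum_stoch_le (R : numDomainType) (phi : nat -> R) P f g :
  {homo phi : a b / (a <= b)%N >-> a <= b} -> stoch_le P f g ->
  \sum_(i | P i) phi (f i) <= \sum_(i | P i) phi (g i).
Proof.
move=> phi_homo fg; set N := \max_i maxn (f i) (g i).
have fN i : (f i <= N)%N by apply: leq_trans (leq_maxl _ (g i)) _; exact: leq_bigmax.
have gN i : (g i <= N)%N by apply: leq_trans (leq_maxr (f i) _) _; exact: leq_bigmax.
rewrite (sum_layer_cake _ _ fN) (sum_layer_cake _ _ gN) lerD2l.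
apply: ler_sum => s _; apply: ler_wpMn2l; first by rewrite subr_ge0 phi_homo.
have := fg s; have := card_sep P (fun i => leqNgt (f i) s).
by have := card_sep P (fun i => leqNgt (g i) s); lia.
Qed.

End StochasticOrder.

Section RankDomination.
Variables (d : Order.disp_t) (T : orderType d) (n : nat).
Implicit Types (y : 'I_n -> T) (z : pred 'I_n).

Lemma stoch_le_rank z y y' :
  stoch_le z (rank_in (fun j => ~~ z j) y') (rank_in (fun j => ~~ z j) y) ->
  stoch_le z (rank_in predT y') (rank_in predT y).
Proof.
move=> dom s; set D := [set i | z i & (rank_in predT y i <= s)%N].
have [->|/card_gt0P[i1 i1D]] := posnP #|D|; first exact: leq0n.
have [i0 i0D i0_max] := @arg_maxnP _ i1 (fun i => i \in D) (rank_in predT y) i1D.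
have /andP[zi0 i0s] : z i0 && (rank_in predT y i0 <= s)%N by move: i0D; rewrite inE.
have D_lexle j : z j -> (j \in D) = lexle (y j) j (y i0) i0.
  move=> zj; rewrite -rank_le_lexle; apply/idP/idP => [/i0_max //|ji0].
  by rewrite inE zj (leq_trans ji0 i0s).
set r := #|D|; set x := rank_in (fun j => ~~ z j) y i0.
have rank_i0 : rank_in z y i0 = r.
  apply: eq_card => j; rewrite inE.
  case: (boolP (z j)) => zj; first by rewrite D_lexle.
  by rewrite inE (negbTE zj).
have rxs : (r + x <= s)%N by rewrite -rank_i0 -rank_in_predTE.
have r_le : (r <= #|[set i | z i & (rank_in (fun j => ~~ z j) y' i <= x)%N]|)%N.
  apply: leq_trans (dom x); apply/subset_leq_card/subsetP => j jD.
  have zj : z j by move: jD; rewrite inE => /andP[].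
  by rewrite inE zj le_rank_in // -D_lexle.
have r_z : (r <= #|[set i | z i]|)%N.
  by apply/subset_leq_card/subsetP => j; rewrite !inE => /andP[].
apply: leq_trans (card_rank_in_ge y' r_z) _; apply/subset_leq_card/subsetP => i.
rewrite !inE => /andP[zi ri]; rewrite zi (rank_in_predTE z) /=.
suff ix : (rank_in (fun j => ~~ z j) y' i <= x)%N.
  by apply: leq_trans rxs; exact: leq_add.
rewrite leqNgt; apply/negP => xi.
have below j : z j -> (rank_in (fun j => ~~ z j) y' j <= x)%N -> lexle (y' j) j (y' i) i.
  move=> _ jx; apply: contraTT xi => /lexle_swap/(le_rank_in (fun j => ~~ z j)) ij.
  by rewrite -leqNgt (leq_trans ij jx).
have := card_lt_rank_in (U := fun j => (rank_in (fun j => ~~ z j) y' j <= x)%N) zi _ below.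
by rewrite -ltnNge xi => /(_ isT) lt; have := leq_trans lt (leq_trans ri r_le); rewrite ltnn.
Qed.

End RankDomination.

Section UniformProbability.
Variables (R : realFieldType) (aT : finType) (S : {set aT}).

Definition unif_prob (E : pred aT) : R := #|[set a in S | E a]|%:R / #|S|%:R.

Lemma unif_prob_sub (E E' : pred aT) :
  (forall a, a \in S -> E a -> E' a) -> unif_prob E <= unif_prob E'.
Proof.
move=> EE'; rewrite ler_wpM2r ?invr_ge0 ?ler0n // ler_nat.
apply/subset_leq_card/subsetP => a; rewrite !inE => /andP[Sa Ea].
by rewrite Sa EE'.
Qed.

Lemma unif_prob_pvalue_gt (T : aT -> R) (alpha : R) :
  (0 < #|S|)%N -> 0 <= alpha ->
  1 - alpha <= unif_prob (fun a => alpha < unif_prob (fun b => T a <= T b)).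
Proof.
move=> S_gt0 alpha_ge0; set N : R := #|S|%:R; have N_gt0 : 0 < N by rewrite ltr0n.
set pv := fun a => unif_prob (fun b => T a <= T b).
set Bad := [set a in S | pv a <= alpha].
have Bad_le : #|Bad|%:R <= alpha * N.
  have [->|/card_gt0P[b0 b0B]] := posnP #|Bad|; first by rewrite mulr_ge0 ?ler0n.
  have [a0 a0B a0_min] := @arg_minP _ R _ b0 (fun a => a \in Bad) T b0B.
  have /andP[_ pva0] : (a0 \in S) && (pv a0 <= alpha) by move: a0B; rewrite inE.
  move: pva0; rewrite /pv /unif_prob ler_pdivrMr // => /(le_trans _); apply.
  rewrite ler_nat; apply/subset_leq_card/subsetP => a aB.
  by rewrite inE a0_min // andbT; move: aB; rewrite inE => /andP[].
have := @card_sep _ (fun a => a \in S) _ _ (fun a => leNgt (pv a) alpha).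
rewrite /= cardsE => split.
rewrite /unif_prob ler_pdivlMr // mulrBl mul1r lerBlDr -/N.
by apply: le_trans (lerD (lexx _) Bad_le); rewrite -natrD split.
Qed.

End UniformProbability.

Arguments unif_prob {R aT}.

Section RankStatistics.
Variables (R : realType) (n : nat).
Implicit Types (y : 'I_n -> \bar R) (z A : assign n) (i j : 'I_n).

Lemma psi_lexle i j (u v : \bar R) : psi i j u v = lexle v j u i.
Proof. by rewrite /psi /lexle eq_sym. Qed.

Lemma sum_psi (P : pred 'I_n) y i :
  (\sum_(j < n | P j) psi i j (y i) (y j))%N = rank_in P y i.
Proof.
rewrite /rank_in -sum1_card big_mkcond [RHS]big_mkcond /=.
by apply: eq_bigr => j _; rewrite inE psi_lexle; case: (P j); case: lexle.
Qed.

Lemma rank_rank_in y i : rank y i = rank_in predT y i.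
Proof. by rewrite /rank -sum_psi. Qed.

Lemma tstat_le kd (phi : nat -> R) z y y' :
  {homo phi : a b / (a <= b)%N >-> a <= b} ->
  stoch_le z (rank_in (fun j => ~~ z j) y') (rank_in (fun j => ~~ z j) y) ->
  tstat kd phi z y' <= tstat kd phi z y.
Proof.
move=> phi_homo dom; case: kd => /=.
  under eq_bigr do rewrite rank_rank_in.
  under [leRHS]eq_bigr do rewrite rank_rank_in.
  exact: sum_stoch_le (stoch_le_rank dom).
under eq_bigr do rewrite sum_psi.
under [leRHS]eq_bigr do rewrite sum_psi.
exact: sum_stoch_le dom.
Qed.

Definition perm_assign (s : {perm 'I_n}) A : assign n := [ffun i => A (s^-1%g i)].

Lemma perm_assignE s A i : perm_assign s A (s i) = A i.
Proof. by rewrite ffunE permK. Qed.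

Lemma perm_assign_inj s : injective (perm_assign s).
Proof.
move=> A B eAB; apply/ffunP => i.
by rewrite -(perm_assignE s A) -(perm_assignE s B) eAB.
Qed.

Lemma card_perm_assign s A : #|[set i | perm_assign s A i]| = #|[set i | A i]|.
Proof.
rewrite -[RHS](card_preimset _ (@perm_inj _ s^-1)).
by apply: eq_card => i; rewrite !inE ffunE.
Qed.

Lemma tstat_perm kd (phi : nat -> R) (s : {perm 'I_n}) y y' A :
  (forall i j, psi (s i) (s j) (y' (s i)) (y' (s j)) = psi i j (y i) (y j)) ->
  tstat kd phi (perm_assign s A) y' = tstat kd phi A y.
Proof.
move=> psi_s; set A' := perm_assign s A.
have reindex (P' P : pred 'I_n) (F' F : 'I_n -> R) :
    (forall i, P' (s i) = P i) -> (forall i, F' (s i) = F i) ->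
    \sum_(i | P' i) F' i = \sum_(i | P i) F i.
  by move=> PP' FF'; rewrite (reindex_inj (@perm_inj _ s)); apply: eq_big.
have reindex_nat (P' P : pred 'I_n) i :
    (forall j, P' (s j) = P j) ->
    (\sum_(j | P' j) psi (s i) j (y' (s i)) (y' j) = \sum_(j | P j) psi i j (y i) (y j))%N.
  by move=> PP'; rewrite (reindex_inj (@perm_inj _ s)); apply: eq_big => // j _; exact: psi_s.
case: kd => /=; apply: reindex => i; rewrite ?perm_assignE //.
  by rewrite /rank (reindex_nat predT predT).
by rewrite (reindex_nat (fun j => ~~ A' j) (fun j => ~~ A j)) // => j; rewrite perm_assignE.
Qed.

Lemma Gfun_unif_prob n1 kd (phi : nat -> R) (y0 : 'I_n -> R) y x :
  Gfun n1 kd phi y0 x = unif_prob (cre_support n n1) (fun A => x <= tstat kd phi A y).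
Proof.
rewrite /Gfun /Pcre /unif_prob; congr (_%:R / _).
set y0' := fun i => (y0 i)%:E; set s := relabel y y0'.
rewrite -[LHS](card_preimset _ (@perm_assign_inj s)); apply: eq_card => A.
rewrite !inE card_perm_assign (tstat_perm _ _ _ (y := y)) //.
by move=> i j; rewrite !psi_lexle lexle_relabel.
Qed.

Lemma Gfun_antitone n1 kd (phi : nat -> R) (y0 : 'I_n -> R) x x' :
  x <= x' -> Gfun n1 kd phi y0 x' <= Gfun n1 kd phi y0 x.
Proof. by move=> xx'; apply: unif_prob_sub => A _; apply: le_trans. Qed.

End RankStatistics.

Lemma count_gt_nth_sort d (T : orderType d) (x0 : T) (s : seq T) k :
  (0 < k <= size s)%N ->
  (count (fun v => nth x0 (sort <=%O s) k.-1 < v)%O s <= size s - k)%N.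
Proof.
move=> /andP[k_gt0 k_le]; set s' := sort <=%O s.
have size_s' : size s' = size s by rewrite size_sort.
have s's : perm_eq s' s by rewrite perm_sort.
rewrite -(seq.permP s's) -[X in count _ X](cat_take_drop k s') count_cat.
have -> : count (fun v => nth x0 s' k.-1 < v)%O (take k s') = 0%N.
  apply/eqP; rewrite -leqn0 leqNgt -has_count; apply/hasPn => v.
  case/(nthP x0) => j; rewrite size_takel ?size_s' // => jk <-.
  rewrite nth_take // -leNgt; apply: (sorted_leq_nth le_trans lexx).
  - by apply: sort_sorted; exact: le_total.
  - by rewrite inE size_s' (leq_trans jk).
  - by rewrite inE size_s' prednK ?(leq_trans _ k_le).
  - by rewrite -ltnS prednK.
by rewrite add0n (leq_trans (count_size _ _)) // size_drop size_s'.
Qed.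

Lemma card_set_count (I : finType) (P : pred I) : #|[set i | P i]| = count P (enum I).
Proof. by rewrite cardsE cardE enumT -size_filter /enum_mem. Qed.

Lemma card_tau_gt_sorted (R : realType) n n1 (Y1 Y0 : 'I_n -> R) z k :
  z \in cre_support n n1 -> (1 <= k <= n1)%N ->
  (#|[set i | z i & (tau_sorted Y1 Y0 z k < Y1 i - Y0 i)%R]| <= n1 - k)%N.
Proof.
move=> z_supp k_range; set taus := [seq Y1 i - Y0 i | i <- enum 'I_n & z i].
have size_taus : size taus = n1.
  move: z_supp; rewrite inE => /eqP <-.
  by rewrite size_map size_filter card_set_count.
rewrite -size_taus; apply: leq_trans (count_gt_nth_sort 0 _); last by rewrite size_taus.
rewrite card_set_count /taus [leqRHS]count_map [leqRHS]count_filter.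
by apply: eq_leq; apply: eq_count => i; rewrite /= andbC.
Qed.

Section BigExtrema.
Variables (R : realType) (I : finType) (P : pred I) (F : I -> R).

Lemma le_fine_bigmaxe i : P i -> F i <= fine (\big[maxe/-oo%E]_(l | P l) (F l)%:E).
Proof.
move=> Pi; have := le_bigmax_cond -oo%E (fun l => (F l)%:E) Pi.
have [j _ ->] := eq_bigmax (x := -oo%E) i P (fun l => (F l)%:E) Pi (fun l _ => leNye _).
by rewrite lee_fin.
Qed.

Lemma fine_bigmine_le i : P i -> fine (\big[mine/+oo%E]_(l | P l) (F l)%:E) <= F i.
Proof.
move=> Pi; have := bigmin_le_cond +oo%E (fun l => (F l)%:E) Pi.
have [j _ ->] := eq_bigmin (x := +oo%E) i P (fun l => (F l)%:E) Pi (fun l _ => leey _).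
by rewrite lee_fin.
Qed.

End BigExtrema.

Section Imputation.
Variables (R : realType) (n n1 : nat) (Y1 Y0 : 'I_n -> R) (M1 M0 : 'I_n -> bool).
Variables (m : mech) (kappa : R).
Hypothesis mok : mech_ok m M1 M0.
Implicit Types (z : assign n) (delta : 'I_n -> R) (i l : 'I_n).

Definition imputedY0 i : \bar R :=
  match m with
  | Mg => (Y0 i)%:E
  | Mmp => if M0 i then (Y0 i)%:E else +oo%E
  | Mmn => if M1 i then (Y0 i)%:E else -oo%E
  end.

Local Notation tY := (tildeY Y1 Y0 M1 M0 m).

Lemma tildeY_ctrl z delta l : ~~ z l ->
  tY z delta l = if M0 l then (Y0 l)%:E else (if m is Mmn then -oo else +oo)%E.
Proof.
by move=> /negbTE zl; rewrite /tildeY /Mobs /Yobs zl; case: (M0 l) => //; case: m.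
Qed.

Lemma tildeY_obs z delta i : z i -> M1 i -> tY z delta i = (Y1 i - delta i)%:E.
Proof. by move=> zi Mi; rewrite /tildeY /Mobs /Yobs zi Mi. Qed.

Lemma tildeY_miss z delta i : z i -> ~~ M1 i ->
  tY z delta i = (if m is Mmp then +oo else -oo)%E.
Proof. by move=> zi /negbTE Mi; rewrite /tildeY /Mobs /Yobs zi Mi; case: m. Qed.

Lemma imputedY0_le_ctrl z delta l : ~~ z l -> (imputedY0 l <= tY z delta l)%E.
Proof.
move=> zl; rewrite tildeY_ctrl // /imputedY0.
by case: m mok => /= [_|_|/(_ l)]; case: (M0 l); case: (M1 l); rewrite ?lexx ?leey ?leNye.
Qed.

Lemma tildeY_miss_le z delta i : z i -> ~~ M1 i -> (tY z delta i <= imputedY0 i)%E.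
Proof.
move=> zi Mi; rewrite tildeY_miss // /imputedY0.
case: m mok => /= mok'; rewrite ?leNye //.
by have := mok' i; rewrite (negbTE Mi) implybF => /negbTE ->.
Qed.

Lemma Y0_le_imputedY0 i : M1 i -> ((Y0 i)%:E <= imputedY0 i)%E.
Proof.
by move=> Mi; rewrite /imputedY0; case: m; rewrite ?Mi //; case: (M0 i); rewrite ?leey.
Qed.

Lemma inJE z i : inJ M1 M0 z i = z i && M1 i.
Proof. by rewrite /inJ /Mobs; case: (z i). Qed.

Lemma posJ_rank_in z i :
  posJ Y1 Y0 M1 M0 z i = rank_in (inJ M1 M0 z) (fun j => (Yobs Y1 Y0 z j)%:E) i.
Proof.
apply: eq_card => j; rewrite !inE psi_lexle.
by case: lexle; rewrite ?andbT ?andbF.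
Qed.

Lemma le_pval kd (phi : nat -> R) y0 z k c c' :
  {homo phi : a b / (a <= b)%N >-> a <= b} -> c <= c' ->
  pval Y1 Y0 M1 M0 n1 kd phi y0 m kappa z k c <=
  pval Y1 Y0 M1 M0 n1 kd phi y0 m kappa z k c'.
Proof.
move=> phi_homo cc'; apply/Gfun_antitone/tstat_le => //.
apply: stoch_le_pointwise => i zi; apply: rank_in_raise => [l zl|].
  by rewrite !tildeY_ctrl.
apply: le_lexle; have [Mi|Mi] := boolP (M1 i); last by rewrite !tildeY_miss.
by rewrite !tildeY_obs // lee_fin /xi; case: ifP => // _; rewrite lerD2l lerN2.
Qed.

End Imputation.

Lemma subr_gap_lt (R : realDomainType) (a M m kappa : R) :
  0 < kappa -> a <= M -> a - (M - m + kappa) < m.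
Proof. by move=> *; lra. Qed.

Section NullComparison.
Variables (R : realType) (n n1 : nat) (Y1 Y0 : 'I_n -> R) (M1 M0 : 'I_n -> bool).
Variables (m : mech) (kappa : R).
Hypotheses (mok : mech_ok m M1 M0) (kappa_gt0 : 0 < kappa).
Variables (z : assign n) (k : nat).
Hypotheses (z_supp : z \in cre_support n n1) (k_range : (1 <= k <= n1)%N).
Implicit Types (i j l : 'I_n).

Local Notation J := (inJ M1 M0 z).
Local Notation c := (tau_sorted Y1 Y0 z k).
Local Notation L := (minn (n1 - k) (n11 M1 M0 z)).
Local Notation JL := (inJL Y1 Y0 M1 M0 z L).
Local Notation gap := (maxJ Y1 Y0 M1 M0 z - minC Y1 Y0 M1 M0 z + kappa).
Local Notation y := (imputedY0 Y0 M1 M0 m).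
Local Notation y' := (tildeY Y1 Y0 M1 M0 m z (xi Y1 Y0 M1 M0 n1 kappa z k c)).
Local Notation ctrl_rank := (rank_in (fun l => ~~ z l)).

(* B holds the unshifted units of J with effect above c, the only treated
   units that the imputation may rank above y; C holds the shifted units with
   effect at most c. *)
Let tau_above := [set i | J i & (c < Y1 i - Y0 i)%R].
Let B := tau_above :\: [set i | JL i].
Let C := [set i | JL i] :\: tau_above.

Lemma JL_J i : JL i -> J i.
Proof. by case/andP. Qed.

Lemma tildeY_JL i : JL i -> y' i = (Y1 i - gap)%:E.
Proof.
move=> iL; have := JL_J iL; rewrite inJE => /andP[zi Mi].
by rewrite tildeY_obs // /xi iL.
Qed.

Lemma tildeY_J i : J i -> ~~ JL i -> y' i = (Y1 i - c)%:E.
Proof. by rewrite inJE => /andP[zi Mi] /negbTE iL; rewrite tildeY_obs // /xi iL. Qed.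

(* The shift puts the units of J_L below every observed control outcome, so
   only controls imputed at -oo are counted. *)
Lemma ctrl_rank_JL i j : JL i -> J j -> (ctrl_rank y' i <= ctrl_rank y j)%N.
Proof.
move=> iL jJ; apply/subset_leq_card/subsetP => l; rewrite !inE => /andP[zl li].
rewrite zl /=; suff yl : y l = -oo%E.
  rewrite yl lt_lexle // (lt_le_trans (ltNyr (Y0 j))) // Y0_le_imputedY0 //.
  by move: jJ; rewrite inJE => /andP[].
have := imputedY0_le_ctrl Y1 Y0 mok (xi Y1 Y0 M1 M0 n1 kappa z k c) zl.
move: (lexle_le li); rewrite (tildeY_JL iL) tildeY_ctrl //.
case M0l: (M0 l); last by case: m => //=; rewrite ?leye_eq // => _; rewrite leeNy_eq => /eqP.
rewrite lee_fin => Y0_low; exfalso.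
have Y0_ge : minC Y1 Y0 M1 M0 z <= Y0 l.
  have := @fine_bigmine_le R _ (fun l => ~~ z l && Mobs M1 M0 z l) (Yobs Y1 Y0 z) l.
  by rewrite /Mobs /Yobs (negbTE zl) M0l; apply.
have Y1_le : Y1 i <= maxJ Y1 Y0 M1 M0 z.
  have := @le_fine_bigmaxe R _ (inJ M1 M0 z) (Yobs Y1 Y0 z) i (JL_J iL).
  by move: (JL_J iL); rewrite inJE => /andP[zi _]; rewrite /Yobs zi.
have := subr_gap_lt (minC Y1 Y0 M1 M0 z) kappa_gt0 Y1_le.
by rewrite ltNge (le_trans Y0_ge Y0_low).
Qed.

Lemma ctrl_rank_offB i : z i -> i \notin B -> (ctrl_rank y' i <= ctrl_rank y i)%N.
Proof.
move=> zi iB; have [Mi|Mi] := boolP (M1 i); last first.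
  apply: rank_in_raise => [l|]; first exact: imputedY0_le_ctrl.
  exact/le_lexle/tildeY_miss_le.
have iJ : J i by rewrite inJE zi.
have [iL|iL] := boolP (JL i); first exact: ctrl_rank_JL.
apply: rank_in_raise => [l|]; first exact: imputedY0_le_ctrl.
apply: le_lexle; rewrite tildeY_J // (le_trans _ (Y0_le_imputedY0 _ _ _ Mi)) // lee_fin.
move: iB; rewrite !inE iL iJ /= -leNgt => tau_le.
by rewrite lerBlDr -lerBlDl.
Qed.

Lemma ctrl_rank_B_C b j : b \in B -> j \in C -> (ctrl_rank y' b <= ctrl_rank y j)%N.
Proof.
rewrite /B /C /tau_above !inE => /andP[bL /andP[bJ _]] /andP[jtau jL].
have jJ := JL_J jL; have tau_j : Y1 j - Y0 j <= c by move: jtau; rewrite jJ /= -leNgt.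
move: (bJ) (jJ); rewrite !inJE => /andP[zb _] /andP[zj Mj].
have bj : lexle (Y1 b)%:E b (Y1 j)%:E j.
  have := lexle_rank_in (y := fun i => (Yobs Y1 Y0 z i)%:E) (j := j) bJ.
  rewrite -!posJ_rank_in /= /Yobs zb zj; apply.
  by move: bL jL; rewrite /inJL bJ jJ /= -leqNgt => bL /ltnW; exact: leq_trans.
apply: rank_in_raise => [l|]; first exact: imputedY0_le_ctrl.
rewrite tildeY_J //; apply: (@lexle_trans _ _ _ _ _ (Y1 j - c)%:E j).
  rewrite (lexle_mono (f := fun u => (u - c)%:E)) => [|u v]; last by rewrite lee_fin lerD2r.
  by move: bj; rewrite (lexle_mono (f := EFin)) // => u v; rewrite lee_fin.
apply/le_lexle/(le_trans _ (Y0_le_imputedY0 _ _ _ Mj)).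
by rewrite lee_fin lerBlDr -lerBlDl.
Qed.

Lemma card_JL_ge : (L <= #|[set i | JL i]|)%N.
Proof.
set rk := rank_in J (fun j => (Yobs Y1 Y0 z j)%:E).
have low := card_rank_in_le J (fun j => (Yobs Y1 Y0 z j)%:E) (n11 M1 M0 z - L).
have := card_sep J (fun i => leqNgt (rk i) (n11 M1 M0 z - L)).
have -> : [set i | JL i] = [set i | J i & (n11 M1 M0 z - L < rk i)%N].
  by apply/setP => i; rewrite !inE /inJL posJ_rank_in.
have : (L <= n11 M1 M0 z)%N := geq_minr _ _.
rewrite /n11 -/rk in low *; lia.
Qed.

Lemma card_B_le_C : (#|B| <= #|C|)%N.
Proof.
rewrite /B /C !cardsD [[set i | JL i] :&: _]setIC leq_sub2r //.
apply: leq_trans card_JL_ge; rewrite leq_min; apply/andP; split.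
  apply: leq_trans (card_tau_gt_sorted Y1 Y0 z_supp k_range).
  apply/subset_leq_card/subsetP => i; rewrite /tau_above !inE inJE.
  by case/andP => /andP[-> _] ->.
by apply/subset_leq_card/subsetP => i; rewrite /tau_above !inE => /andP[].
Qed.

Lemma stoch_le_tildeY : stoch_le z (ctrl_rank y') (ctrl_rank y).
Proof.
apply: (stoch_le_exchange (B := B) (C := C)).
- by move=> i; rewrite /C !inE => /andP[_ /JL_J]; rewrite inJE => /andP[].
- exact: card_B_le_C.
- exact: ctrl_rank_offB.
- exact: ctrl_rank_B_C.
- move=> i b; rewrite /B /C /tau_above !inE => /andP[_ iL] /andP[_ /andP[bJ _]].
  exact: ctrl_rank_JL.
Qed.

Lemma unif_prob_le_pval kd (phi : nat -> R) y0 :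
  {homo phi : a b / (a <= b)%N >-> a <= b} ->
  unif_prob (cre_support n n1) (fun A => tstat kd phi z y <= tstat kd phi A y) <=
  pval Y1 Y0 M1 M0 n1 kd phi y0 m kappa z k c.
Proof.
move=> phi_homo; rewrite /pval (Gfun_unif_prob _ _ _ _ y).
apply: unif_prob_sub => A _; apply: le_trans.
exact: tstat_le phi_homo stoch_le_tildeY.
Qed.

End NullComparison.

Lemma cre_support_card_gt0 n n1 : (n1 <= n)%N -> (0 < #|cre_support n n1|)%N.
Proof.
move=> n1n; apply/card_gt0P; exists [ffun i : 'I_n => (i < n1)%N]; rewrite inE.
have widen_inj : injective (widen_ord n1n) by move=> a b [e]; apply: val_inj.
have -> : [set i | [ffun i : 'I_n => (i < n1)%N] i] = widen_ord n1n @: [set: 'I_n1].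
  apply/setP => i; rewrite inE ffunE; apply/idP/imsetP => [lt|[j _ ->]].
    by exists (Ordinal lt) => //; apply: val_inj.
  exact: (ltn_ord j).
by rewrite (card_imset _ widen_inj) cardsT card_ord.
Qed.

(* Imported only now: classical_sets shadows set0, setP and subsetP of finset. *)
From mathcomp Require Import classical_sets ereal.
Local Open Scope classical_set_scope.

Lemma upclosed_ereal_inf (R : realType) (P : R -> bool) :
  (forall c c', c <= c' -> P c -> P c') ->
  let t := ereal_inf [set c%:E | c in [set c | P c]] in
  (forall c, P c <-> (t <= c%:E)%E) \/ (forall c, P c <-> (t < c%:E)%E).
Proof.
move=> P_up t.
have inf_le c : P c -> (t <= c%:E)%E by move=> Pc; apply: ereal_inf_lbound; exists c.
have lt_inf c : (t < c%:E)%E -> P c.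
  by move=> /ereal_inf_lt[_ [c0 Pc0 <-]]; rewrite lte_fin => /ltW/P_up; apply.
move: inf_le lt_inf; rewrite -/t; case: t => [r| |] inf_le lt_inf.
- have [Pr|Pr] := boolP (P r).
    left => c; split; first exact: inf_le.
    by rewrite le_eqVlt => /orP[/eqP[<-]|/lt_inf].
  right => c; split; last exact: lt_inf.
  by move=> Pc; rewrite lt_neqAle inf_le // andbT; apply: contraNneq Pr => -[->].
- by right => c; split => // /inf_le.
- by right => c; split => [_|]; [rewrite ltNyr | exact: lt_inf].
Qed.

Theorem theorem7 (R : realType) (n n1 : nat) (Y1 Y0 : 'I_n -> R)
    (M1 M0 : 'I_n -> bool) (m : mech) (kd : stat_kind) (phi : nat -> R)
    (y0 : 'I_n -> R) (kappa alpha : R) :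
  (0 < n1)%N -> (n1 < n)%N ->
  mech_ok m M1 M0 ->
  {homo phi : a b / (a <= b)%N >-> a <= b} ->
  0 < kappa -> 0 < alpha < 1 ->
  let I (z : assign n) (k : nat) (c : R) : bool :=
    alpha < pval Y1 Y0 M1 M0 n1 kd phi y0 m kappa z k c in
  (* marginal validity *)
  (forall k, (1 <= k <= n1)%N ->
     1 - alpha <= Pcre R n1 (fun z => I z k (tau_sorted Y1 Y0 z k)))
  /\
  (* one-sided interval with endpoint the infimum *)
  (forall k, (1 <= k <= n1)%N -> forall z, z \in cre_support n n1 ->
     let tauhat := ereal_inf [set c%:E | c in [set c | I z k c]] in
     (forall c : R, I z k c <-> (tauhat <= c%:E)%E) \/
     (forall c : R, I z k c <-> (tauhat < c%:E)%E))
  /\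
  (* simultaneous validity *)
  1 - alpha <= Pcre R n1 (fun z =>
     [forall k : 'I_n1.+1, (0 < k)%N ==> I z k (tau_sorted Y1 Y0 z k)]).
Proof.
move=> _ n1_lt_n mok phi_homo kappa_gt0 /andP[alpha_gt0 _] I.
set S := cre_support n n1; set T := fun A => tstat kd phi A (imputedY0 Y0 M1 M0 m).
have PcreE E : Pcre R n1 E = unif_prob S E by [].
have valid : 1 - alpha <= unif_prob S (fun z => alpha < unif_prob S (fun A => T z <= T A)).
  exact: unif_prob_pvalue_gt (cre_support_card_gt0 (ltnW n1_lt_n)) (ltW alpha_gt0).
have covered z k : z \in S -> (1 <= k <= n1)%N ->
    alpha < unif_prob S (fun A => T z <= T A) -> I z k (tau_sorted Y1 Y0 z k).
  by move=> zS k_range /lt_le_trans; apply; exact: unif_prob_le_pval.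
split; [|split].
- move=> k k_range; rewrite PcreE; apply: (le_trans valid).
  by apply: unif_prob_sub => z zS; exact: covered.
- move=> k _ z _; apply: upclosed_ereal_inf => c c' cc'.
  by move=> /lt_le_trans; apply; exact: le_pval.
- rewrite PcreE; apply: (le_trans valid); apply: unif_prob_sub => z zS z_good.
  apply/forallP => k; apply/implyP => k_gt0; apply: covered => //.
  by rewrite k_gt0 -ltnS ltn_ord.
Qed.
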